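(* Let $p$ be an odd prime and let $(P_n)_{n\ge0}$ be the Catalan-Larcombe-French numbers. Then $P_{p-1}\equiv(-1)^{\frac{p-1}{2}}\pmod{p}$ and $16P_{p-2}\equiv(-1)^{\frac{p-1}{2}}\pmod{p}$.
   Context: The Catalan-Larcombe-French numbers are defined by $P_0=1$, $P_1=8$ and, for $n\ge 2$, $n^2P_n-8(3n^2-3n+1)P_{n-1}+128(n-1)^2P_{n-2}=0$. Equivalently, $P_n=\frac{1}{n!}\sum_{r+s=n}\binom{2r}{r}\binom{2s}{s}\frac{(2r)!(2s)!}{r!s!}$ (sum over nonnegative integers $r,s$). *)

From mathcomp Require Import all_boot all_algebra.
Set Implicit Arguments. Unset Strict Implicit. Unset Printing Implicit Defensive.
Import GRing.Theory Num.Theory.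
Local Open Scope ring_scope.

Definition CLF (n : nat) : rat :=
  (n`!%:R)^-1 * \sum_(r < n.+1)
    (('C(2*r, r) * 'C(2*(n-r), n-r))%:R * ((2*r)`! * (2*(n-r))`!)%:R
       / ((r`! * (n-r)`!)%:R)).

From mathcomp Require Import all_boot all_algebra.
From mathcomp Require Import zify ring.

Set Implicit Arguments.
Unset Strict Implicit.
Unset Printing Implicit Defensive.
Import GRing.Theory Num.Theory.
Local Open Scope ring_scope.

(* P_n = sum_(r + s = n) C(2r, r) C(2s, s) S(r, s), where
   S(m, n) = (2m)! (2n)! / (m! n! (m + n)!) are Gessel's super Catalan numbers,
   which are integers by the recursion S(m, n + 1) = 4 S(m, n) - S(m + 1, n).
   Modulo an odd prime p, C(2r, r) vanishes whenever r < p <= 2r, so only the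
   central terms of the sum survive.  For n = p - 1 this leaves
   C(p-1, (p-1)/2)^3, and C(p-1, k) = (-1)^k mod p.  For n = p - 2 it leaves
   4 c^2 C with c = C(p-3, (p-3)/2) and C = C(p-1, (p-1)/2); the ratio
   S(m, n + 1) / S(m, n) = 2(2n + 1) / (m + n + 1) gives C = 8c mod p, hence
   16 P_(p-2) = C^3 mod p.  The congruences are proved in any commutative ring
   of characteristic p and transported to the rationals through F_p. *)

Fixpoint super_catalan (m n : nat) : int :=
  if n is n'.+1 then 4 * super_catalan m n' - super_catalan m.+1 n'
  else 'C(2 * m, m)%:Z.

Lemma natr_fact_neq0 (R : numDomainType) n : n`!%:R != 0 :> R.
Proof. by rewrite pnatr_eq0 -lt0n fact_gt0. Qed.

Lemma super_catalanE (R : numFieldType) m n :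
  (super_catalan m n)%:~R
    = ((2 * m)`! * (2 * n)`!)%:R / (m`! * n`! * (m + n)`!)%:R :> R.
Proof.
have fact_neq0 := natr_fact_neq0 R.
elim: n m => [|n IHn] m /=.
  rewrite -pmulrn mul2n -addnn -{1}(bin_fact (leq_addl m m)) addnK addn0 !natrM.
  by field; rewrite !fact_neq0.
rewrite intrB intrM !IHn.
rewrite !mulnS !addnS addSn !factS !natrM -!natr1 !natrM natrD.
have -> : 4%:~R = 4 :> R by [].
by field; rewrite !fact_neq0 -natrD !natr1 !pnatr_eq0.
Qed.

Lemma super_catalanC m n : super_catalan m n = super_catalan n m.
Proof.
apply: (@intr_inj rat); rewrite !super_catalanE addnC mulnC.
by rewrite [(m`! * n`!)%N]mulnC.
Qed.

Lemma super_catalan_diag m : super_catalan m m = 'C(2 * m, m)%:Z.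
Proof.
apply: (@intr_inj rat); rewrite super_catalanE -pmulrn.
rewrite mul2n -addnn -{1}(bin_fact (leq_addl m m)) addnK !natrM.
by field; rewrite !natr_fact_neq0.
Qed.

Lemma super_catalanSr m n :
  (m + n).+1%:R * super_catalan m n.+1 = (2 * (2 * n).+1)%:R * super_catalan m n.
Proof.
apply: (@intr_inj rat); rewrite !intrM !mulrz_nat !super_catalanE.
rewrite mulnS addnS !factS !natrM -!natr1 !natrM.
by field; rewrite !natr_fact_neq0 -natrD !natr1 !pnatr_eq0.
Qed.

Lemma super_catalan_diagS m : super_catalan m m.+1 = 2 * 'C(2 * m, m)%:Z.
Proof.
have nz : (2 * m).+1%:R != 0 :> int by rewrite pnatr_eq0.
apply: (mulfI nz); rewrite mulrCA.
by have := super_catalanSr m m; rewrite super_catalan_diag addnn -mul2n natrM -mulrA.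
Qed.

Definition CLF_term (n r : nat) : int :=
  ('C(2 * r, r) * 'C(2 * (n - r), n - r))%:R * super_catalan r (n - r).

Definition CLFz (n : nat) : int := \sum_(r < n.+1) CLF_term n r.

Lemma CLFE n : CLF n = (CLFz n)%:~R.
Proof.
rewrite /CLF /CLFz mulr_sumr rmorph_sum; apply: eq_bigr => r _ /=.
rewrite intrM mulrz_nat super_catalanE (subnKC (ltn_ord r : (r <= n)%N)) !natrM.
by field; rewrite !natr_fact_neq0.
Qed.

Lemma prime_dvd_fact p n : prime p -> (p %| n`!)%N = (p <= n)%N.
Proof.
move=> p_pr; elim: n => [|n IHn].
  by rewrite fact0 dvdn1 leqn0; case: p p_pr => [|[|]].
rewrite factS Euclid_dvdM // IHn.
have [le_pn | lt_np] := leqP p n; first by rewrite orbT (leqW le_pn).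
rewrite orbF; apply/idP/idP => [/dvdn_leq -> // | le_pn1].
by have -> : p = n.+1 by apply/eqP; rewrite eqn_leq le_pn1.
Qed.

Lemma prime_dvd_central_bin p r :
  prime p -> (r < p <= 2 * r)%N -> (p %| 'C(2 * r, r))%N.
Proof.
move=> p_pr /andP[lt_rp le_p2r].
have := prime_dvd_fact (2 * r) p_pr; rewrite le_p2r mul2n -addnn.
rewrite -(bin_fact (leq_addl r r)) addnK !Euclid_dvdM // prime_dvd_fact // leqNgt lt_rp.
by rewrite !orbF.
Qed.

Section CharacteristicP.

Variables (R : comNzRingType) (p : nat).
Hypothesis pcharRp : p \in [pchar R].

Lemma natr_bin_pred_pchar k : (k < p)%N -> 'C(p.-1, k)%:R = (-1) ^+ k :> R.
Proof.
elim: k => [|k IHk] lt_kp; first by rewrite bin0.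
have p_gt0 := prime_gt0 (pcharf_prime pcharRp).
have := bin_lt_pcharf_0 pcharRp (k := k.+1); rewrite lt_kp -(prednK p_gt0) binS natrD.
by move/(_ isT)/eqP; rewrite addr_eq0 => /eqP->; rewrite IHk 1?ltnW // exprS mulN1r.
Qed.

Lemma natr_central_bin_pchar r : (r < p <= 2 * r)%N -> 'C(2 * r, r)%:R = 0 :> R.
Proof.
move=> r_range; apply/eqP.
by rewrite -(dvdn_pcharf pcharRp) prime_dvd_central_bin ?(pcharf_prime pcharRp).
Qed.

Lemma natr_pchar_opp m n : (m + n)%N = p -> m%:R = - n%:R :> R.
Proof. by move=> mn_p; apply/eqP; rewrite -addr_eq0 -natrD mn_p (pcharf0 pcharRp). Qed.

Lemma CLF_term_pchar n r :
  (r <= n < p)%N -> (p <= 2 * r)%N || (p <= 2 * (n - r))%N ->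
  (CLF_term n r)%:~R = 0 :> R.
Proof.
move=> /andP[le_rn lt_np] /orP[le_p2r | le_p2s]; rewrite intrM mulrz_nat natrM.
  by rewrite (@natr_central_bin_pchar r) ?mul0r //; apply/andP; split => //; lia.
rewrite (@natr_central_bin_pchar (n - r)) ?mulr0 ?mul0r //.
by apply/andP; split => //; lia.
Qed.

Lemma CLFz_pchar n : (n < p)%N ->
  (CLFz n)%:~R = \sum_(r < n.+1 | (2 * r < p)%N && (2 * (n - r) < p)%N)
                    (CLF_term n r)%:~R :> R.
Proof.
move=> lt_np; rewrite rmorph_sum.
rewrite (bigID (fun r : 'I_n.+1 => (2 * r < p)%N && (2 * (n - r) < p)%N)) /=.
rewrite [X in _ + X]big1 ?addr0 // => r; rewrite negb_and -!leqNgt => out_r.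
by rewrite CLF_term_pchar // lt_np andbT -ltnS.
Qed.

Lemma CLFz_even_pchar h : p = (2 * h).+1 -> (CLFz (2 * h))%:~R = (-1) ^+ h :> R.
Proof.
move=> def_p; have lt_h : (h < (2 * h).+1)%N by lia.
rewrite CLFz_pchar ?def_p // (big_pred1 (Ordinal lt_h)) => [|r]; last first.
  by rewrite /= -val_eqE /=; apply/idP/eqP => [/andP[]|->]; lia.
have bin_sign : 'C(2 * h, h)%:R = (-1) ^+ h :> R.
  by rewrite -natr_bin_pred_pchar ?def_p.
rewrite /CLF_term /= (_ : 2 * h - h = h)%N; last by lia.
rewrite super_catalan_diag intrM mulrz_nat -pmulrn natrM bin_sign.
by rewrite -expr2 sqrr_sign mul1r.
Qed.

Lemma CLFz_odd_pchar k :
  p = (2 * k).+3 -> 16 * (CLFz (2 * k).+1)%:~R = (-1) ^+ k.+1 :> R.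
Proof.
move=> def_p; have lt_k : (k < (2 * k).+2)%N by lia.
have lt_k1 : (k.+1 < (2 * k).+2)%N by lia.
rewrite CLFz_pchar ?def_p // (bigD1 (Ordinal lt_k)) /=; last by apply/andP; split; lia.
rewrite (big_pred1 (Ordinal lt_k1)) => [|r]; last first.
  rewrite /= -!val_eqE /=; apply/idP/eqP => [/andP[/andP[]]|->]; lia.
rewrite /CLF_term /= (_ : (2 * k).+1 - k = k.+1)%N; last by lia.
rewrite (_ : (2 * k).+1 - k.+1 = k)%N; last by lia.
rewrite super_catalan_diagS super_catalanC super_catalan_diagS.
rewrite !intrM !mulrz_nat -pmulrn !natrM.
set c := 'C(2 * k, k)%:R; set C := 'C(2 * k.+1, k.+1)%:R.
have C_sign : C = (-1) ^+ k.+1.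
  rewrite /C (_ : 2 * k.+1 = p.-1)%N ?natr_bin_pred_pchar // def_p; lia.
have C_8c : C = 8 * c.
  (* (2k + 2) C = 2 (2k + 1) (2c), where 2k + 2 = -1 and 2k + 1 = -2 mod p *)
  have := super_catalanSr k.+1 k.
  rewrite super_catalan_diag super_catalanC super_catalan_diagS.
  move/(congr1 (intmul (1 : R))).
  rewrite !intrM !mulrz_nat -!pmulrn natrM -/c -/C.
  rewrite (@natr_pchar_opp (k.+1 + k).+1 1) ?(@natr_pchar_opp (2 * k).+1 2); try lia.
  by rewrite mulN1r => /(congr1 -%R); rewrite opprK => ->; ring.
rewrite (_ : 16 * _ = (8 * c) ^+ 2 * C); last by ring.
by rewrite -C_8c C_sign sqrr_sign mul1r.
Qed.

End CharacteristicP.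

Lemma intr_Fp_congr p (z w : int) : prime p -> z%:~R = w%:~R :> 'F_p ->
  exists k : int, z%:~R - w%:~R = p%:R * k%:~R :> rat.
Proof.
move=> p_pr zw_eq.
have /dvdzP[k def_zw] : (p %| z - w)%Z.
  by rewrite (dvdz_pcharf (pchar_Fp p_pr)) intrB zw_eq subrr.
by exists k; rewrite -intrB def_zw intrM -pmulrn mulrC.
Qed.

Theorem lemma4 (p : nat) (hp : prime p) (hodd : odd p) :
  (exists k : int, CLF (p.-1) - (-1) ^+ (p.-1)./2 = p%:R * k%:~R) /\
  (exists k : int, 16 * CLF (p.-2) - (-1) ^+ (p.-1)./2 = p%:R * k%:~R).
Proof.
have [h def_p] : exists h, p = (2 * h).+1.
  by exists p./2; rewrite -{1}(odd_double_half p) hodd add1n mul2n.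
have [k def_h] : exists k, h = k.+1.
  by exists h.-1; rewrite prednK // lt0n; apply: contraTneq hp => h0; rewrite def_p h0.
have pFp := pchar_Fp hp.
have -> : (p.-1)./2 = h by rewrite def_p /= mul2n doubleK.
rewrite -(intr_sign rat); split.
  have -> : p.-1 = (2 * h)%N by rewrite def_p.
  rewrite CLFE; apply: intr_Fp_congr => //.
  by rewrite intr_sign (CLFz_even_pchar pFp def_p).
have -> : p.-2 = (2 * k).+1 by rewrite def_p def_h mulnS.
rewrite CLFE -[16 : rat]/((16 : int)%:~R) -intrM; apply: intr_Fp_congr => //.
rewrite intrM intr_sign def_h.
by apply: (CLFz_odd_pchar pFp); rewrite def_p def_h mulnS.
Qed.
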